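(* Let $G=(V,E)$ with $|V|\ge 3$, $N\ge3$, $\varepsilon=0$ and $s_0\in S_{nc}$. Then for every $\gamma\in(0,1)$, the game $\Gamma_N(G|s_0,\gamma,0)$ has a nonpositional trigger strategies profile $\bar\sigma$.
   Context: Setting. $G=(V,E)$ is a finite, simple, connected, undirected graph; $N\ge 3$ is an integer; $\gamma\in(0,1)$ and $\varepsilon\in[0,\frac1{N-1}]$ are parameters. There are $N$ tokens: cops $C_1,\dots,C_{N-1}$ (tokens $1,\dots,N-1$) and the robber $R$ (token $N$). A state is $s=(x^1,\dots,x^N,n)$ where $x^i\in V$ is the position of token $i$ and $n\in\{1,\dots,N\}$ is the token that moves next; $S^n$ denotes the set of states with token $n$ to move. A state is a capture state if $x^i=x^N$ for some $i\le N-1$; $S_{nc}$ is the set of noncapture states. In each turn exactly one token, the one to move, moves to a vertex of its closed neighbourhood (it may stay put); the order of moves is $C_1,C_2,\dots,C_{N-1},R,C_1,\dots$. Starting from an initial state $s_0\in S_{nc}$ at time $0$, the capture time is the first time $t$ at which a capture state occurs (infinite if never); after capture the game is over. Auxiliary games. For $m\in\{1,\dots,N\}$, $\Gamma_N^m(G|s_0,\gamma,\varepsilon)$ is the two-player zero-sum game in which player $P_m$ controls token $m$ and player $P_{-m}$ controls all other tokens, with the following payoff to $P_m$ ($P_{-m}$ receives its negative): $0$ if no capture ever occurs; if capture occurs at time $t$: for $m=N$, $-\gamma^t$; for $m\le N-1$, $\frac{1-\varepsilon}{K}\gamma^t$ if exactly $K\in\{1,\dots,N-2\}$ cops, including $C_m$,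 are on the robber's vertex, $\frac{\varepsilon}{N-K-1}\gamma^t$ if exactly $K\in\{1,\dots,N-2\}$ cops, not including $C_m$, are on the robber's vertex, and $\frac{\gamma^t}{N-1}$ if all $N-1$ cops are on the robber's vertex. $\Gamma^N_N$ is the modified cops-and-robber (CR) game. A pure positional strategy for token $n$ maps each state in $S^n\cap S_{nc}$ to an allowed next vertex. Each $\Gamma^m_N$ has optimal pure positional strategies (optimal from every initial state). For $m,n\in\{1,\dots,N\}$, $\phi^n_m$ denotes the strategy of token $n$ in a chosen pair of optimal pure positional strategies of $\Gamma^m_N$ (so $\phi^m_m$ is $P_m$'s optimal strategy and $(\phi^n_m)_{n\ne m}$ is $P_{-m}$'s). $\widehat\Sigma^n$ is the set of pure positional strategies of token $n$ that are components of optimal strategy pairs of $\Gamma^N_N$ (CR-optimal strategies). Trigger strategies. Given a choice of $(\phi^n_m)_{n,m}$, the trigger strategies profile $\bar\sigma=(\bar\sigma^1,\dots,\bar\sigma^N)$ of the $N$-player SCAR game $\Gamma_N(G|s_0,\gamma,\varepsilon)$ (same board and moves; player $n$ controls token $n$) is: token $n$, at current state $s$, plays $\phi^n_n(s)$ as long as every other player $m$ has followed $\phi^m_m$, and plays $\phi^n_m(s)$ from the moment a player $m\neq n$ deviates from $\phi^m_m$. Different choices of the optimal strategies give different trigger strategies profiles. $\bar\sigma$ is called positional if for all $n,m\in\{1,\dots,N\}$ there is $\widehat\sigma^n\in\widehat\Sigma^n$ with $\phi^n_m(s)=\widehat\sigma^n(s)$ for every state $s\in S^n\cap S_{nc}$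 reachable from $s_0$ by a finite sequence of legal moves passing only through noncapture states; otherwise $\bar\sigma$ is nonpositional. *)

From Stdlib Require Import Reals ClassicalEpsilon.
From mathcomp Require Import all_boot.

Set Implicit Arguments.
Unset Strict Implicit.
Unset Printing Implicit Defensive.

Section SCAR.

Variables (V : finType) (e : rel V) (N : nat).

(* Tokens are 'I_N : indices 0 .. N-2 are the cops C_1 .. C_{N-1},
   index N-1 is the robber R. *)
Definition is_rob (i : 'I_N) : bool := (i : nat) == N.-1.
Definition is_cop (i : 'I_N) : bool := (i : nat) < N.-1.

Definition state : finType := ({ffun 'I_N -> V} * 'I_N)%type.

Definition pos (s : state) (i : 'I_N) : V := s.1 i.
Definition mover (s : state) : 'I_N := s.2.

Definition near (u v : V) : bool := (u == v) || e u v.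

Definition on_rob (s : state) (i : 'I_N) : bool :=
  [exists j : 'I_N, is_rob j && (pos s i == pos s j)].

Definition captured (s : state) : bool :=
  [exists i : 'I_N, is_cop i && on_rob s i].

(* the token to move moves to v; the turn passes cyclically
   C_1, ..., C_{N-1}, R, C_1, ... *)
Definition move (s : state) (v : V) : state :=
  ([ffun i => if i == mover s then v else pos s i], @ordS N (mover s)).

(* General (history-dependent) pure strategy of a token: it sees the initial
   state and the sequence of subsequent states (current state = last). *)
Definition gstrat := state -> seq state -> V.

(* Pure positional strategy of a token: a function of the current state
   (only its values on S^n ∩ S_nc matter). *)
Definition pstrat := state -> V.

Definition lift (phi : pstrat) : gstrat := fun s0 h => phi (last s0 h).

Definition legal_g (n : 'I_N) (tau : gstrat) : Prop :=
  forall s0 h, let s := last s0 h in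
    mover s = n -> ~~ captured s -> near (pos s n) (tau s0 h).

Definition legal_p (n : 'I_N) (phi : pstrat) : Prop :=
  forall s, mover s = n -> ~~ captured s -> near (pos s n) (phi s).

(* The play generated by a profile of strategies: hist t = [s_1; ...; s_t]. *)
Fixpoint hist (sig : 'I_N -> gstrat) (s0 : state) (t : nat) : seq state :=
  match t with
  | 0 => [::]
  | t'.+1 => let h := hist sig s0 t' in
             let s := last s0 h in
             rcons h (move s (sig (mover s) s0 h))
  end.

Definition state_at sig s0 t : state := last s0 (hist sig s0 t).

Open Scope R_scope.

(* Coefficient of gamma^t in the payoff of player P_m of Γ^m_N when the
   capture state is s (K = number of cops on the robber's vertex). *)
Definition coef (eps : R) (m : 'I_N) (s : state) : R :=
  if is_rob m then -1 else
  let K := #|[set i : 'I_N | is_cop i && on_rob s i]| in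
  if K == N.-1 then / INR (N - 1)
  else if on_rob s m then (1 - eps) / INR K
  else eps / INR (N - K - 1).

Definition payoff (gamma eps : R) (m : 'I_N) (sig : 'I_N -> gstrat)
  (s0 : state) : R :=
  match excluded_middle_informative
          (exists t, captured (state_at sig s0 t)) with
  | left H =>
      let t := ex_minn (P := fun t => captured (state_at sig s0 t)) H in
      gamma ^ t * coef eps m (state_at sig s0 t)
  | right _ => 0
  end.

(* phi is a pair of optimal pure positional strategies of Γ^m_N
   (phi m for P_m, (phi n)_{n <> m} for P_{-m}), optimal from every
   initial noncapture state: a saddle point against all (possibly
   history-dependent) legal strategies. *)
Definition opt_pair (gamma eps : R) (m : 'I_N) (phi : 'I_N -> pstrat) : Prop :=
  (forall n, legal_p n (phi n)) /\
  forall s0 : state, ~~ captured s0 ->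
    (forall tau : gstrat, legal_g m tau ->
       payoff gamma eps m (fun n => if n == m then tau else lift (phi n)) s0
       <= payoff gamma eps m (fun n => lift (phi n)) s0) /\
    (forall tau : 'I_N -> gstrat, (forall n, n != m -> legal_g n (tau n)) ->
       payoff gamma eps m (fun n => lift (phi n)) s0
       <= payoff gamma eps m
            (fun n => if n == m then lift (phi m) else tau n) s0).

(* CR-optimal strategies \hat\Sigma^n : positional strategies of token n that
   are components of optimal strategy pairs of Γ^N_N (the game of the robber);
   compared on the states where they are used (S^n ∩ S_nc). *)
Definition CR_optimal (gamma eps : R) (n : 'I_N) (sh : pstrat) : Prop :=
  exists (r : 'I_N) (psi : 'I_N -> pstrat),
    is_rob r /\ opt_pair gamma eps r psi /\
    forall s, mover s = n -> ~~ captured s -> psi n s = sh s.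

Inductive reachable (s0 : state) : state -> Prop :=
  | reach0 : reachable s0 s0
  | reachS s v : reachable s0 s -> ~~ captured s -> near (pos s (mover s)) v ->
                 reachable s0 (move s v).

(* A choice Phi m n = phi^n_m of optimal strategy pairs of all the Γ^m_N. *)
Definition optimal_choice (gamma eps : R) (Phi : 'I_N -> 'I_N -> pstrat) : Prop :=
  forall m, opt_pair gamma eps m (Phi m).

Definition trigger_positional (gamma eps : R) (s0 : state)
  (Phi : 'I_N -> 'I_N -> pstrat) : Prop :=
  forall n m : 'I_N, exists sh : pstrat,
    CR_optimal gamma eps n sh /\
    forall s, reachable s0 s -> mover s = n -> ~~ captured s ->
      Phi m n s = sh s.

Definition trigger_nonpositional gamma eps s0 Phi : Prop :=
  ~ trigger_positional gamma eps s0 Phi.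

End SCAR.

(* In each auxiliary game the Bellman operator of the discounted capture game is monotone,
   so its greatest post-fixed point (Knaster-Tarski) is a fixed point; comparing the
   discounted continuation values along any play shows it is the value, and every legal
   positional profile attaining it is a pair of optimal strategies.
   With eps = 0 a cop gets nothing from a capture in which it does not take part, so its
   value is nonnegative.  Since |V| >= 3 and there are at least two cops, play can be
   steered to a state where the robber, to move, is next to cop C_j while cop C_m stands
   elsewhere.  There, in the game of C_m, stepping onto C_j is an optimal robber move,
   and we let phi^N_m make it; in the robber's own game that step yields -gamma while
   standing still yields more, so phi^N_m agrees with no CR-optimal strategy. *)

From Stdlib Require Import Reals Lra ClassicalEpsilon.
From mathcomp Require Import all_boot zify.

Set Implicit Arguments.
Unset Strict Implicit.
Unset Printing Implicit Defensive.

Local Open Scope R_scope.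

Lemma seq_argmax (T : eqType) (f : T -> R) (x0 : T) (s : seq T) :
  exists2 x, x \in x0 :: s & forall y, y \in x0 :: s -> f y <= f x.
Proof.
elim: s x0 => [|x1 s IH] x0.
  by exists x0 => [|y]; rewrite ?mem_head // inE => /eqP->; apply: Rle_refl.
have [x Hx Hmax] := IH x1.
have [le_x0x|lt_xx0] := Rle_lt_dec (f x0) (f x).
  exists x => [|y]; first by rewrite inE Hx orbT.
  by rewrite inE => /predU1P[->|/Hmax].
exists x0 => [|y]; first exact: mem_head.
rewrite inE => /predU1P[->|/Hmax]; lra.
Qed.

Lemma exists_argmax (T : finType) (P : pred T) (f : T -> R) (x0 : T) :
  P x0 -> exists x, P x /\ forall y, P y -> f y <= f x.
Proof.
move=> Px0; have [x Hx Hmax] := seq_argmax f x0 (enum P).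
exists x; split; first by move: Hx; rewrite inE mem_enum => /predU1P[->|].
by move=> y Py; apply: Hmax; rewrite inE mem_enum; apply/orP; right.
Qed.

Lemma exists_argmin (T : finType) (P : pred T) (f : T -> R) (x0 : T) :
  P x0 -> exists x, P x /\ forall y, P y -> f x <= f y.
Proof.
move=> /(exists_argmax (fun x => - f x)) [x [Px Hmin]].
by exists x; split => // y /Hmin; lra.
Qed.

Lemma fin_bounded (T : finType) (f : T -> R) :
  exists2 M, 0 <= M & forall x, - M <= f x <= M.
Proof.
suff [M M0 HM] : exists2 M, 0 <= M & forall x, x \in enum T -> - M <= f x <= M.
  by exists M => // x; apply: HM; rewrite mem_enum.
elim: (enum T) => [|y s [M M0 HM]]; first by exists 0; [apply: Rle_refl|].
have := Rle_abs (f y); have := Rle_abs (- f y); rewrite Rabs_Ropp.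
have := Rmax_l M (Rabs (f y)); have := Rmax_r M (Rabs (f y)).
exists (Rmax M (Rabs (f y))) => [|x]; first lra.
by rewrite inE => /predU1P[->|/HM]; lra.
Qed.

Lemma nonincr_le (w : nat -> R) (T : nat) :
  (forall t, (t < T)%N -> w t.+1 <= w t) -> w T <= w 0%N.
Proof.
elim: T => [|T IH] Hw; first exact: Rle_refl.
apply: Rle_trans (Hw T (ltnSn T)) (IH (fun t Ht => Hw t (ltnW Ht))).
Qed.

Lemma nonincr_ge0 (w : nat -> R) :
  (forall t, w t.+1 <= w t) -> (forall d, 0 < d -> exists t, Rabs (w t) < d) ->
  0 <= w 0%N.
Proof.
move=> Hw Hv; apply: Rnot_lt_le => w0_lt0.
have [t Ht] := Hv (- w 0%N) ltac:(lra).
have := nonincr_le (T := t) (fun t _ => Hw t).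
have := Rle_abs (- w t); rewrite Rabs_Ropp; lra.
Qed.

Lemma geom_vanish (gamma B : R) (f : nat -> R) :
  0 < gamma < 1 -> (forall t, - B <= f t <= B) ->
  forall d, 0 < d -> exists t, Rabs (gamma ^ t * f t) < d.
Proof.
move=> [g0 g1] Hf d d0.
have B0 : 0 <= B by have := Hf 0%N; lra.
have [t Ht] : exists t, Rabs (gamma ^ t) < d / (B + 1).
  have [t Ht] := pow_lt_1_zero gamma ltac:(rewrite Rabs_right; lra) (d / (B + 1))
                   ltac:(apply: Rdiv_lt_0_compat; lra).
  by exists t; apply: Ht; apply: Nat.le_refl.
exists t; rewrite Rabs_mult.
have ft_le : Rabs (f t) <= B by apply: Rabs_le; apply: Hf.
have : d / (B + 1) * (B + 1) = d by field; lra.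
have := Rabs_pos (gamma ^ t); have := Rabs_pos (f t); nra.
Qed.

Section Play.
Variables (V : finType) (e : rel V) (N : nat).
Implicit Types (s : state V N) (sig : 'I_N -> gstrat V N).

Lemma pos_move s v i : pos (move s v) i = if i == mover s then v else pos s i.
Proof. by rewrite /pos ffunE. Qed.

Lemma near_refl (u : V) : near e u u.
Proof. by rewrite /near eqxx. Qed.

Lemma near_edge (u v : V) : e u v -> near e u v.
Proof. by rewrite /near => ->; rewrite orbT. Qed.

Lemma captured_eq s s' : pos s =1 pos s' -> captured s = captured s'.
Proof.
move=> Es; apply: eq_existsb => i; congr (_ && _).
by apply: eq_existsb => j; rewrite !Es.
Qed.

Lemma state_atS sig s0 t :
  state_at sig s0 t.+1 =
  move (state_at sig s0 t) (sig (mover (state_at sig s0 t)) s0 (hist sig s0 t)).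
Proof. by rewrite /state_at /= last_rcons. Qed.

Lemma payoffP gamma eps m sig s0 :
  (payoff gamma eps m sig s0 = 0 /\ forall t, ~~ captured (state_at sig s0 t)) \/
  exists t, captured (state_at sig s0 t) /\
    (forall t', (t' < t)%N -> ~~ captured (state_at sig s0 t')) /\
    payoff gamma eps m sig s0 = gamma ^ t * coef eps m (state_at sig s0 t).
Proof.
rewrite /payoff; case: excluded_middle_informative => [Hc|Hnc].
  right; case: ex_minnP => t Ht Hmin; exists t; split; [done|split; [|done]].
  by move=> t' lt_t't; apply/negP => /Hmin; rewrite leqNgt lt_t't.
by left; split => // t; apply/negP => Ht; apply: Hnc; exists t.
Qed.

End Play.

Section Verification.
Variables (V : finType) (N : nat) (gamma eps : R) (m : 'I_N).
Hypotheses (gamma_gt0 : 0 < gamma) (gamma_lt1 : gamma < 1).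
Implicit Types (s : state V N) (U : state V N -> R) (sig : 'I_N -> gstrat V N).

Definition value_at U s : R := if captured s then coef eps m s else U s.

Definition discounted U sig s0 (t : nat) : R :=
  gamma ^ t * value_at U (state_at sig s0 t).

Lemma discounted_succ U sig s0 t : ~~ captured (state_at sig s0 t) ->
  discounted U sig s0 t.+1 - discounted U sig s0 t =
  gamma ^ t * (gamma * value_at U (state_at sig s0 t.+1) - U (state_at sig s0 t)).
Proof. by move=> Ht; rewrite /discounted {2}/value_at (negbTE Ht) /=; ring. Qed.

Lemma payoff_discounted U sig s0 : ~~ captured s0 ->
  discounted U sig s0 0 = U s0 /\
  ((exists T, (forall t, (t < T)%N -> ~~ captured (state_at sig s0 t)) /\
      payoff gamma eps m sig s0 = discounted U sig s0 T) \/
   ((forall t, ~~ captured (state_at sig s0 t)) /\ payoff gamma eps m sig s0 = 0)).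
Proof.
move=> s0_nc; split; first by rewrite /discounted /state_at /= /value_at (negbTE s0_nc); ring.
case: (payoffP gamma eps m sig s0) => [[-> nc]|[T [cT [pre ->]]]]; [right|left] => //.
by exists T; split; rewrite // /discounted /value_at cT.
Qed.

Lemma discounted_vanish U sig s0 d : 0 < d -> exists t, Rabs (discounted U sig s0 t) < d.
Proof.
have [B _ HB] := fin_bounded (value_at U).
exact: geom_vanish (conj gamma_gt0 gamma_lt1) (fun t => HB (state_at sig s0 t)) d.
Qed.

Lemma payoff_le_of_superharmonic U sig s0 : ~~ captured s0 ->
  (forall t, ~~ captured (state_at sig s0 t) ->
     gamma * value_at U (state_at sig s0 t.+1) <= U (state_at sig s0 t)) ->
  payoff gamma eps m sig s0 <= U s0.
Proof.
move=> s0_nc super.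
have step t : ~~ captured (state_at sig s0 t) ->
    discounted U sig s0 t.+1 <= discounted U sig s0 t.
  move=> Ht; have := discounted_succ U Ht; have := super t Ht.
  have := pow_le gamma t (Rlt_le _ _ gamma_gt0); nra.
have [<- [[T [pre ->]]|[nc ->]]] := payoff_discounted U sig s0_nc.
  by apply: nonincr_le => t /pre; apply: step.
by apply: nonincr_ge0 (fun t => step t (nc t)) _ => d; apply: discounted_vanish.
Qed.

Lemma payoff_ge_of_subharmonic U sig s0 : ~~ captured s0 ->
  (forall t, ~~ captured (state_at sig s0 t) ->
     U (state_at sig s0 t) <= gamma * value_at U (state_at sig s0 t.+1)) ->
  U s0 <= payoff gamma eps m sig s0.
Proof.
move=> s0_nc sub.
have step t : ~~ captured (state_at sig s0 t) ->
    - discounted U sig s0 t.+1 <= - discounted U sig s0 t.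
  move=> Ht; have := discounted_succ U Ht; have := sub t Ht.
  have := pow_le gamma t (Rlt_le _ _ gamma_gt0); nra.
have [<- [[T [pre ->]]|[nc ->]]] := payoff_discounted U sig s0_nc.
  by apply: Ropp_le_cancel; apply: (nonincr_le (w := fun t => - _)) => t /pre; apply: step.
apply: Ropp_le_cancel; rewrite Ropp_0.
apply: (nonincr_ge0 (w := fun t => - _)) (fun t => step t (nc t)) _ => d.
by move=> /(discounted_vanish U sig s0) [t Ht]; exists t; rewrite Rabs_Ropp.
Qed.

End Verification.

Section Game.
Variables (V : finType) (e : rel V) (N : nat) (gamma eps : R) (m : 'I_N).
Hypotheses (gamma_gt0 : 0 < gamma) (gamma_lt1 : gamma < 1).
Implicit Types (s : state V N) (U W : state V N -> R).

Notation value_at := (value_at eps m).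

Definition prefers s (x y : R) : Prop := if mover s == m then x <= y else y <= x.

Definition best_reply_spec U s (v : V) : Prop :=
  near e (pos s (mover s)) v /\
  forall w, near e (pos s (mover s)) w ->
    prefers s (value_at U (move s w)) (value_at U (move s v)).

Definition best_reply U s : V :=
  epsilon (inhabits (pos s (mover s))) (best_reply_spec U s).

Lemma best_replyP U s : best_reply_spec U s (best_reply U s).
Proof.
apply: epsilon_spec; rewrite /best_reply_spec /prefers.
have here := near_refl e (pos s (mover s)).
case: (mover s == m).
- have [v [Hv Hmax]] := exists_argmax (fun v => value_at U (move s v)) here.
  by exists v.
- have [v [Hv Hmin]] := exists_argmin (fun v => value_at U (move s v)) here.
  by exists v.
Qed.

Definition bellman U s : R := gamma * value_at U (move s (best_reply U s)).

Lemma value_at_mono U W s : (forall x, U x <= W x) -> value_at U s <= value_at W s.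
Proof. by rewrite /value_at; case: captured => // _; apply: Rle_refl. Qed.

Lemma bellman_mono U W : (forall x, U x <= W x) -> forall s, bellman U s <= bellman W s.
Proof.
move=> le_UW s; rewrite /bellman.
have [HU Uopt] := best_replyP U s; have [HW Wopt] := best_replyP W s.
have := Wopt _ HU; have := Uopt _ HW; rewrite /prefers; case: (mover s == m) => optU optW.
- have := value_at_mono (move s (best_reply U s)) le_UW; nra.
- have := value_at_mono (move s (best_reply W s)) le_UW; nra.
Qed.

Variable M : R.
Hypotheses (M_ge0 : 0 <= M) (coef_bounded : forall s, - M <= coef eps m s <= M).

Definition postfixed U : Prop := forall s, U s <= M /\ U s <= bellman U s.

(* Knaster-Tarski: the supremum of the post-fixed points of the monotone [bellman]. *)
Definition game_value s : R :=
  epsilon (inhabits 0) (is_lub (fun x => exists2 U, postfixed U & x = U s)).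

Lemma game_value_lub s :
  is_lub (fun x => exists2 U, postfixed U & x = U s) (game_value s).
Proof.
apply: epsilon_spec.
set E := fun x => exists2 U, postfixed U & x = U s.
have E_bounded : bound E.
  by exists M; move=> x [U HU ->]; exact: (proj1 (HU s)).
have E_inhabited : exists x, E x.
  exists (- M); exists (fun _ : state V N => - M) => // x; split; first lra.
  rewrite /bellman /value_at; case: captured; last nra.
  have := coef_bounded (move x (best_reply (fun _ => - M) x)); nra.
by have [x Hx] := @completeness E E_bounded E_inhabited; exists x.
Qed.

Lemma postfixed_le_game_value U : postfixed U -> forall s, U s <= game_value s.
Proof. by move=> HU s; apply: (proj1 (game_value_lub s)); exists U. Qed.

Lemma game_value_le_bound s : game_value s <= M.
Proof. by apply: (proj2 (game_value_lub s)) => x [U HU ->]; exact: (proj1 (HU s)). Qed.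

Lemma game_value_le_bellman s : game_value s <= bellman game_value s.
Proof.
apply: (proj2 (game_value_lub s)) => x [U HU ->].
apply: Rle_trans (proj2 (HU s)) _; apply: bellman_mono.
exact: postfixed_le_game_value.
Qed.

Lemma game_value_fix s : game_value s = bellman game_value s.
Proof.
apply: Rle_antisym; first exact: game_value_le_bellman.
apply: (postfixed_le_game_value (U := bellman game_value)) => x; split.
  rewrite /bellman /value_at; case: captured.
    by have := coef_bounded (move x (best_reply game_value x)); nra.
  by have := game_value_le_bound (move x (best_reply game_value x)); nra.
exact: bellman_mono game_value_le_bellman x.
Qed.

Lemma game_value_ge0 : (forall s, 0 <= coef eps m s) -> forall s, 0 <= game_value s.
Proof.
move=> coef_ge0; apply: (postfixed_le_game_value (U := fun _ => 0)) => s.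
split => //; rewrite /bellman /value_at; case: captured; last lra.
by have := coef_ge0 (move s (best_reply (fun _ => 0) s)); nra.
Qed.

Lemma game_value_max s v : mover s = m -> near e (pos s (mover s)) v ->
  gamma * value_at game_value (move s v) <= game_value s.
Proof.
move=> Hm /(proj2 (best_replyP game_value s)); rewrite /prefers Hm eqxx.
by rewrite [game_value s]game_value_fix /bellman; nra.
Qed.

Lemma game_value_min s v : mover s != m -> near e (pos s (mover s)) v ->
  game_value s <= gamma * value_at game_value (move s v).
Proof.
move=> Hm /(proj2 (best_replyP game_value s)); rewrite /prefers (negbTE Hm).
by rewrite [game_value s]game_value_fix /bellman; nra.
Qed.

Lemma opt_pair_of_bellman (phi : 'I_N -> pstrat V N) :
  (forall n, legal_p e n (phi n)) ->
  (forall s, ~~ captured s ->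
     game_value s = gamma * value_at game_value (move s (phi (mover s) s))) ->
  opt_pair e gamma eps m phi.
Proof.
move=> phi_legal phi_attains; split => // s0 s0_nc.
set play := fun n => lift (phi n).
have attains sig t : ~~ captured (state_at sig s0 t) ->
    sig (mover (state_at sig s0 t)) s0 (hist sig s0 t) =
      phi (mover (state_at sig s0 t)) (state_at sig s0 t) ->
    game_value (state_at sig s0 t) = gamma * value_at game_value (state_at sig s0 t.+1).
  by move=> Ht Hsig; rewrite state_atS Hsig; apply: phi_attains.
have le_play : payoff gamma eps m play s0 <= game_value s0.
  apply: (payoff_le_of_superharmonic gamma_gt0 gamma_lt1) => // t Ht.
  by rewrite -(attains _ _ Ht) //; apply: Rle_refl.
have ge_play : game_value s0 <= payoff gamma eps m play s0.
  apply: (payoff_ge_of_subharmonic gamma_gt0 gamma_lt1) => // t Ht.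
  by rewrite -(attains _ _ Ht) //; apply: Rle_refl.
split=> tau tau_legal.
- apply: Rle_trans ge_play; apply: (payoff_le_of_superharmonic gamma_gt0 gamma_lt1) => // t Ht.
  set sig := fun n => _; set st := state_at sig s0 t.
  have [Hm|Hm] := eqVneq (mover st) m.
    rewrite state_atS -/st /sig Hm eqxx.
    by apply: game_value_max => //; rewrite Hm; apply: tau_legal.
  have phi_step : sig (mover st) s0 (hist sig s0 t) = phi (mover st) st.
    by rewrite /sig (negbTE Hm).
  by rewrite -(attains _ _ Ht phi_step); apply: Rle_refl.
- apply: Rle_trans le_play _; apply: (payoff_ge_of_subharmonic gamma_gt0 gamma_lt1) => // t Ht.
  set sig := fun n => _; set st := state_at sig s0 t.
  have [Hm|Hm] := eqVneq (mover st) m.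
    have phi_step : sig (mover st) s0 (hist sig s0 t) = phi (mover st) st.
      by rewrite /sig Hm eqxx.
    by rewrite -(attains _ _ Ht phi_step); apply: Rle_refl.
  rewrite state_atS -/st /sig (negbTE Hm).
  by apply: game_value_min => //; apply: tau_legal.
Qed.

End Game.

Lemma path_exit (T : eqType) (e : rel T) (A : pred T) x p :
  x \in A -> path e x p -> last x p \notin A ->
  exists u v, [/\ u \in A, v \notin A & e u v].
Proof.
elim: p x => [|y p IH] x /=; first by move=> ->.
move=> xA /andP[exy pth] lst; have [yA|yA] := boolP (y \in A).
  exact: IH yA pth lst.
by exists x, y.
Qed.

Lemma exists_third (T : finType) (x y : T) : (3 <= #|T|)%N -> exists z, z \notin [:: x; y].
Proof.
move=> T3; case: (pickP (predC (mem [:: x; y]))) => [z /= zxy|none]; first by exists z.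
suff : (#|T| <= 2)%N by lia.
apply: leq_trans (card_size [:: x; y]).
by apply/subset_leq_card/subsetP => z _; have /= /negbFE := none z.
Qed.

Section Board.
Variables (V : finType) (e : rel V) (n : nat).
Notation S := (state V n.+1).
Notation rob := (@ord_max n).
Implicit Types (s : S) (i j k : 'I_n.+1).

Lemma is_robE i : is_rob i = (i == rob).
Proof. by []. Qed.

Lemma is_copE i : is_cop i = (i != rob).
Proof. by rewrite /is_cop -val_eqE /= ltn_neqAle -ltnS ltn_ord andbT. Qed.

Lemma on_robE s i : on_rob s i = (pos s i == pos s rob).
Proof.
apply/existsP/eqP => [[j /andP[]]|->]; first by rewrite is_robE => /eqP-> /eqP.
by exists rob; rewrite is_robE !eqxx.
Qed.

Lemma capturedP s : reflect (exists2 i, i != rob & pos s i = pos s rob) (captured s).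
Proof.
apply: (iffP existsP) => [[i /andP[]]|[i Hi Ei]].
  by rewrite is_copE on_robE => Hi /eqP; exists i.
by exists i; rewrite is_copE on_robE Hi Ei eqxx.
Qed.

Lemma reachable_trans s1 s2 s3 :
  reachable e s1 s2 -> reachable e s2 s3 -> reachable e s1 s3.
Proof. by move=> R12; elim=> // s v _ R13 s_nc sv; apply: reachS. Qed.

Lemma reachable_wait s d : ~~ captured s ->
  exists s', [/\ reachable e s s', pos s' =1 pos s &
                 (mover s' : nat) = (mover s + d) %% n.+1]%N.
Proof.
move=> s_nc; elim: d => [|d [s' [R Es Ms]]].
  by exists s; split; rewrite ?addn0 ?modn_small //; apply: reach0.
exists (move s' (pos s' (mover s'))); split.
- apply: reachS (near_refl _ _) => //.
  by rewrite (captured_eq Es).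
- by move=> i; rewrite pos_move -Es; case: eqP => [->|].
- by move: Ms; rewrite /mover /= => ->; rewrite -addn1 modnDml addn1 addnS.
Qed.

Lemma reachable_pass s k : ~~ captured s ->
  exists s', [/\ reachable e s s', pos s' =1 pos s & mover s' = k].
Proof.
move=> /(reachable_wait (n.+1 - mover s + k)) [s' [R Es Ms]].
exists s'; split => //; apply: ord_inj.
by rewrite Ms addnA subnKC ?modnDl ?modn_small // ltnW.
Qed.

Lemma reachable_step s i v : ~~ captured s -> near e (pos s i) v ->
  exists s', reachable e s s' /\ forall j, pos s' j = if j == i then v else pos s j.
Proof.
move=> s_nc iv; have [s1 [R Es Ms]] := reachable_pass i s_nc.
exists (move s1 v); split => [|j]; last by rewrite pos_move Ms Es.
by apply: reachable_trans R (reachS (reach0 _ _) _ _); rewrite ?(captured_eq Es) ?Ms ?Es.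
Qed.

Lemma nocapture_cop_move s s' i v : ~~ captured s -> i != rob -> v != pos s rob ->
  (forall j, pos s' j = if j == i then v else pos s j) -> ~~ captured s'.
Proof.
move=> s_nc irob vr Es'; apply/capturedP => -[j jrob].
rewrite !Es' [rob == i]eq_sym (negbTE irob); case: eqP => [_ /eqP|_ Ej]; first exact/negP.
by case/negP: s_nc; apply/capturedP; exists j.
Qed.

Lemma reachable_adjacent s i p : i != rob -> ~~ captured s ->
  path e (pos s i) p -> last (pos s i) p = pos s rob ->
  exists s', [/\ reachable e s s', ~~ captured s', e (pos s' i) (pos s' rob) &
                 forall j, j != i -> pos s' j = pos s j].
Proof.
elim: p s => [|y p IH] s irob s_nc /=.
  by move=> _ Eir; case/negP: s_nc; apply/capturedP; exists i.
move=> /andP[iy pth] lst; have [yr|yr] := eqVneq y (pos s rob).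
  by exists s; split; rewrite -?yr //; apply: reach0.
have [s1 [R1 E1]] := @reachable_step s i y s_nc (near_edge iy).
have s1_nc := nocapture_cop_move s_nc irob yr E1.
have E1rob : pos s1 rob = pos s rob by rewrite E1 [rob == i]eq_sym (negbTE irob).
have E1i : pos s1 i = y by rewrite E1 eqxx.
have [s2 [R2 s2_nc adj E2]] : exists s2, [/\ reachable e s1 s2, ~~ captured s2,
    e (pos s2 i) (pos s2 rob) & forall j, j != i -> pos s2 j = pos s1 j].
  by apply: IH; rewrite ?E1i ?E1rob.
exists s2; split => //; first exact: reachable_trans R1 R2.
by move=> j ji; rewrite E2 // E1 (negbTE ji).
Qed.

Definition sacrifice_state s j k : Prop :=
  [/\ ~~ captured s, mover s = rob, j != rob, k != rob &
      e (pos s rob) (pos s j) /\ pos s k != pos s j].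

Lemma reachable_sacrifice_pass s j k : ~~ captured s -> j != rob -> k != rob ->
  e (pos s rob) (pos s j) -> pos s k != pos s j ->
  exists s', reachable e s s' /\ sacrifice_state s' j k.
Proof.
move=> s_nc jrob krob adj kj; have [s' [R Es Ms]] := reachable_pass rob s_nc.
by exists s'; split=> //; split; rewrite ?(captured_eq Es) ?Es.
Qed.

Hypotheses (e_sym : symmetric e) (e_connected : forall u v, connect e u v).
Hypothesis V_ge3 : (3 <= #|V|)%N.

Section Stacked.
Variables (s : S) (c c' : 'I_n.+1).
Hypotheses (s_nc : ~~ captured s) (crob : c != rob) (c'rob : c' != rob) (cc' : c != c').
Hypothesis adj : e (pos s c) (pos s rob).
Hypothesis stacked : forall j, j != rob -> pos s j = pos s c.

Lemma reachable_sacrifice_robber_detour v : e (pos s rob) v -> v != pos s rob -> v != pos s c ->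
  exists s' j k, reachable e s s' /\ sacrifice_state s' j k.
Proof.
move=> rv vr vw; set r := pos s rob in rv vr; set w := pos s c in vw.
have [s1 [R1 E1]] := reachable_step s_nc (near_edge rv).
have s1_nc : ~~ captured s1.
  apply/capturedP => -[j jrob]; rewrite !E1 eqxx (negbTE jrob) stacked //.
  by move/eqP; rewrite eq_sym (negbTE vw).
have [s2 [R2 E2]] : exists s2, reachable e s1 s2 /\
    forall j, pos s2 j = if j == c then r else pos s1 j.
  by apply: reachable_step; rewrite // E1 (negbTE crob); apply: near_edge.
have E2c : pos s2 c = r by rewrite E2 eqxx.
have E2c' : pos s2 c' = w by rewrite E2 eq_sym (negbTE cc') E1 (negbTE c'rob) stacked.
have E2rob : pos s2 rob = v by rewrite E2 [rob == c]eq_sym (negbTE crob) E1 eqxx.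
have s2_nc : ~~ captured s2.
  by apply: (nocapture_cop_move s1_nc crob _ E2); rewrite E1 eqxx eq_sym.
have [s3 [R3 sac]] : exists s3, reachable e s2 s3 /\ sacrifice_state s3 c c'.
  apply: reachable_sacrifice_pass => //; first by rewrite E2rob E2c e_sym.
  by rewrite E2c' E2c; apply/eqP => wr; case/negP: s_nc; apply/capturedP; exists c.
exists s3, c, c'; split => //.
exact: reachable_trans R1 (reachable_trans R2 R3).
Qed.

Lemma reachable_sacrifice_cop_detour v : e (pos s c) v -> v != pos s rob -> v != pos s c ->
  exists s' j k, reachable e s s' /\ sacrifice_state s' j k.
Proof.
move=> cv vr vw.
have [s1 [R1 E1]] := reachable_step s_nc (near_edge cv).
have s1_nc := nocapture_cop_move s_nc crob vr E1.
have E1c' : pos s1 c' = pos s c by rewrite E1 eq_sym (negbTE cc') stacked.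
have E1rob : pos s1 rob = pos s rob by rewrite E1 [rob == c]eq_sym (negbTE crob).
have [s2 [R2 sac]] : exists s2, reachable e s1 s2 /\ sacrifice_state s2 c' c.
  apply: reachable_sacrifice_pass => //; first by rewrite E1c' E1rob e_sym.
  by rewrite E1c' E1 eqxx.
by exists s2, c', c; split => //; apply: reachable_trans R1 R2.
Qed.

(* The two vertices occupied are left by some edge since [|V| >= 3]; a detour along it,
   by the robber or by cop [c], separates two cops. *)
Lemma reachable_sacrifice_stacked : exists s' j k, reachable e s s' /\ sacrifice_state s' j k.
Proof.
set r := pos s rob; set w := pos s c.
have [z zrw] := exists_third r w V_ge3.
have [q wq zq] := connectP (e_connected w z).
have wA : w \in [:: r; w] by rewrite !inE eqxx orbT.
have zA : last w q \notin [:: r; w] by rewrite -zq.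
have [u [v []]] := path_exit wA wq zA.
rewrite !inE negb_or => /orP[]/eqP-> /andP[vr vw] uv.
  exact: reachable_sacrifice_robber_detour uv vr vw.
exact: reachable_sacrifice_cop_detour uv vr vw.
Qed.

End Stacked.

Lemma reachable_sacrifice s0 : (2 <= n)%N -> ~~ captured s0 ->
  exists s j k, reachable e s0 s /\ sacrifice_state s j k.
Proof.
move=> n_ge2 s0_nc.
pose c : 'I_n.+1 := ord0; pose c' : 'I_n.+1 := inord 1.
have c'E : (c' : nat) = 1%N by rewrite inordK //; lia.
have crob : c != rob by apply/eqP => /(congr1 val) /=; lia.
have c'rob : c' != rob by apply/eqP => /(congr1 val); rewrite /= c'E; lia.
have cc' : c != c' by apply/eqP => /(congr1 val); rewrite /= c'E.
have [p cp pr] := connectP (e_connected (pos s0 c) (pos s0 rob)).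
have [s1 [R1 s1_nc adj _]] := reachable_adjacent crob s0_nc cp (esym pr).
have [s2 [j [k [R2 sac]]]] : exists s2 j k, reachable e s1 s2 /\ sacrifice_state s2 j k.
  case: (pickP [pred k | (k != rob) && (pos s1 k != pos s1 c)]) => [k /andP[krob kc]|spread].
    have [s2 [R2 sac]] : exists s2, reachable e s1 s2 /\ sacrifice_state s2 c k.
      by apply: reachable_sacrifice_pass; rewrite // e_sym.
    by exists s2, c, k.
  apply: (reachable_sacrifice_stacked s1_nc crob c'rob cc' adj) => j jrob.
  by have /= := spread j; rewrite jrob => /negbFE/eqP.
by exists s2, j, k; split => //; apply: reachable_trans R1 R2.
Qed.

End Board.

Section Payoffs.
Variables (V : finType) (n : nat).
Notation S := (state V n.+1).
Notation rob := (@ord_max n).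
Implicit Types (s : S) (m : 'I_n.+1) (sig : 'I_n.+1 -> gstrat V n.+1).

Lemma card_cops_on_rob_lt s m : m != rob -> ~~ on_rob s m ->
  (#|[set i | is_cop i && on_rob s i]| < n)%N.
Proof.
move=> mrob m_off.
have sub : [set i | is_cop i && on_rob s i] \subset ~: [set rob; m].
  apply/subsetP => i; rewrite !inE is_copE => /andP[irob ion].
  by rewrite negb_or irob; apply: contraNneq m_off => <-.
have := cardsC [set rob; m]; rewrite cards2 eq_sym mrob card_ord add2n => -[Cn].
by apply: leq_ltn_trans (subset_leq_card sub) _; rewrite -ltnS Cn.
Qed.

Lemma inv_INR_ge0 k : 0 <= / INR k.
Proof.
case: k => [|k]; first by rewrite Rinv_0; apply: Rle_refl.
by apply/Rlt_le/Rinv_0_lt_compat/lt_0_INR/ltP.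
Qed.

Lemma coef_cop_ge0 m s : m != rob -> 0 <= coef 0 m s.
Proof.
move=> mrob; rewrite /coef is_robE (negbTE mrob) /Rdiv.
case: ifP => _; first exact: inv_INR_ge0.
case: ifP => _; last by rewrite Rmult_0_l; apply: Rle_refl.
by rewrite Rminus_0_r Rmult_1_l; apply: inv_INR_ge0.
Qed.

Lemma coef_cop_off m s : m != rob -> ~~ on_rob s m -> coef 0 m s = 0.
Proof.
move=> mrob m_off; have := card_cops_on_rob_lt mrob m_off.
rewrite /coef is_robE (negbTE mrob) (negbTE m_off) /Rdiv Rmult_0_l.
by case: eqP => // ->; rewrite ltnn.
Qed.

Lemma coef_rob eps s : coef eps rob s = -1.
Proof. by rewrite /coef is_robE eqxx. Qed.

Lemma payoff_rob_capture1 gamma eps sig s : ~~ captured s ->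
  captured (state_at sig s 1) -> payoff gamma eps rob sig s = - gamma.
Proof.
move=> s_nc c1; case: (payoffP gamma eps rob sig s) => [[_ /(_ 1%N)]|[t [ct [pre ->]]]].
  by rewrite c1.
case: t ct pre => [|[|t]] ct pre; first by rewrite (negbTE s_nc) in ct.
  by rewrite coef_rob /=; ring.
by have := pre 1%N isT; rewrite c1.
Qed.

Lemma payoff_rob_gt gamma eps sig s : 0 < gamma < 1 -> ~~ captured s ->
  ~~ captured (state_at sig s 1) -> - gamma < payoff gamma eps rob sig s.
Proof.
move=> [g0 g1] s_nc nc1.
case: (payoffP gamma eps rob sig s) => [[-> _]|[t [ct [pre ->]]]]; first lra.
case: t ct pre => [|[|t]] ct pre; first by rewrite (negbTE s_nc) in ct.
  by rewrite ct in nc1.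
have [_ lt1] := pow_lt_1_compat gamma t.+1 (conj (Rlt_le _ _ g0) g1) (Nat.lt_0_succ t).
by rewrite coef_rob (_ : gamma ^ t.+2 = gamma * gamma ^ t.+1) //; nra.
Qed.

End Payoffs.

Section Sacrifice.
Variables (V : finType) (e : rel V) (n : nat) (gamma M : R).
Notation S := (state V n.+1).
Notation rob := (@ord_max n).
Hypotheses (gamma_gt0 : 0 < gamma) (gamma_lt1 : gamma < 1) (M_ge0 : 0 <= M).
Hypothesis coef_bounded : forall m (s : S), - M <= coef 0 m s <= M.
Variables (ss : S) (j m0 : 'I_n.+1).
Hypothesis ss_sacrifice : sacrifice_state e ss j m0.

Definition sacrifice_choice (m k : 'I_n.+1) (s : S) : V :=
  if [&& m == m0, k == rob & s == ss] then pos ss j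
  else best_reply e 0 m (game_value e gamma 0 m M) s.

Lemma sacrifice_captured : captured (move ss (pos ss j)) /\ ~~ on_rob (move ss (pos ss j)) m0.
Proof.
have [_ Mss jrob m0rob [_ m0j]] := ss_sacrifice.
rewrite on_robE !pos_move Mss eqxx (negbTE m0rob); split => //.
by apply/capturedP; exists j; rewrite // !pos_move Mss eqxx (negbTE jrob).
Qed.

Lemma game_value_sacrifice : game_value e gamma 0 m0 M ss = 0.
Proof.
have [ss_nc Mss jrob m0rob [adj _]] := ss_sacrifice.
have [capt m0_off] := sacrifice_captured.
apply: Rle_antisym.
  have := game_value_min gamma_gt0 gamma_lt1 M_ge0 (coef_bounded m0) (s := ss) (v := pos ss j).
  rewrite Mss /value_at capt coef_cop_off // Rmult_0_r; apply.
    by rewrite eq_sym.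
  by rewrite /near adj orbT.
apply: (game_value_ge0 e gamma_gt0 gamma_lt1 M_ge0 (coef_bounded m0)) => s.
exact: coef_cop_ge0.
Qed.

Lemma sacrifice_choice_optimal : optimal_choice e gamma 0 sacrifice_choice.
Proof.
have [ss_nc Mss jrob m0rob [adj _]] := ss_sacrifice.
move=> m; apply: (opt_pair_of_bellman gamma_gt0 gamma_lt1 M_ge0 (coef_bounded m)).
  move=> k s Mk s_nc; rewrite /sacrifice_choice.
  case: ifP => [/and3P[_ /eqP-> /eqP->]|_]; first by rewrite /near adj orbT.
  by rewrite -Mk; case: (best_replyP e 0 m (game_value e gamma 0 m M) s).
move=> s s_nc; rewrite /sacrifice_choice.
case: ifP => [/and3P[/eqP-> _ /eqP->]|_]; last first.
  exact: (game_value_fix e gamma_gt0 gamma_lt1 M_ge0 (coef_bounded m)).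
have [capt m0_off] := sacrifice_captured.
by rewrite game_value_sacrifice /value_at capt coef_cop_off // Rmult_0_r.
Qed.

Lemma sacrifice_choice_nonpositional s0 : reachable e s0 ss ->
  trigger_nonpositional e gamma 0 s0 sacrifice_choice.
Proof.
have [ss_nc Mss jrob m0rob _] := ss_sacrifice.
move=> Rss positional.
have [sh [[r [psi [r_rob [[psi_legal psi_opt] psi_sh]]]] choice_sh]] := positional rob m0.
rewrite is_robE in r_rob; move/eqP: r_rob => r_rob; subst r.
have psi_ss : psi rob ss = pos ss j.
  by rewrite psi_sh // -choice_sh // /sacrifice_choice !eqxx.
pose stay := lift (fun s => if s == ss then pos ss rob else psi rob s).
have stay_legal : legal_g e rob stay.
  move=> s0' h /= Ms s_nc; rewrite /stay /lift; case: eqP => [->|_].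
    exact: near_refl.
  exact: psi_legal.
have psi_payoff : payoff gamma 0 rob (fun k => lift (psi k)) ss = - gamma.
  apply: payoff_rob_capture1 => //.
  by rewrite state_atS /state_at /= Mss /lift /= psi_ss; case: sacrifice_captured.
have stay_payoff :
    - gamma < payoff gamma 0 rob (fun k => if k == rob then stay else lift (psi k)) ss.
  apply: payoff_rob_gt => //.
  rewrite state_atS /state_at /= Mss eqxx /stay /lift /= eqxx.
  by rewrite (captured_eq (s' := ss)) // => i; rewrite pos_move Mss; case: eqP => [->|].
have [deviation _] := psi_opt ss ss_nc.
by have := deviation stay stay_legal; lra.
Qed.

End Sacrifice.

Local Close Scope R_scope.

Theorem mainTheorem5 (V : finType) (e : rel V) (N : nat) (s0 : state V N) :
  symmetric e -> irreflexive e -> (forall u v : V, connect e u v) ->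
  3 <= #|V| -> 3 <= N -> ~~ captured s0 ->
  forall gamma : R, Rlt 0 gamma /\ Rlt gamma 1 ->
  exists Phi : 'I_N -> 'I_N -> pstrat V N,
    optimal_choice e (N:=N) gamma R0 Phi /\
    trigger_nonpositional e (N:=N) gamma R0 s0 Phi.
Proof.
move=> e_sym _ e_connected V_ge3 N_ge3 s0_nc gamma [gamma_gt0 gamma_lt1].
case: N s0 s0_nc N_ge3 => [//|n] s0 s0_nc N_ge3.
have [M M_ge0 coef_bounded] := fin_bounded (fun ms : 'I_n.+1 * state V n.+1 => coef 0 ms.1 ms.2).
have [ss [j [m0 [Rss sac]]]] := reachable_sacrifice e_sym e_connected V_ge3 N_ge3 s0_nc.
exists (sacrifice_choice e gamma M ss j m0); split.
  exact: (sacrifice_choice_optimal gamma_gt0 gamma_lt1 M_ge0 (fun m s => coef_bounded (m, s)) sac).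
exact: (sacrifice_choice_nonpositional (M := M) gamma_gt0 gamma_lt1 sac Rss).
Qed.
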